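(* Let $\mathbf u$ be an infinite word whose language is closed under reversal, and suppose there exists an integer $H$ such that for every factor $f$ of $\mathbf u$ with $|f|\ge H$ the longest palindromic suffix of $f$ occurs exactly once in $f$. Let $w$ be a non-palindromic factor of $\mathbf u$ with $|w|\ge H$ and let $v$ be a palindromic factor of $\mathbf u$ with $|v|\ge H$. Then: (i) the occurrences of $w$ and $\overline w$ in $\mathbf u$ alternate, i.e., every complete return word of $w$ contains $\overline w$ as a factor; (ii) every factor $e$ of $\mathbf u$ which has prefix $w$ and suffix $\overline w$ and contains no other occurrences of $w$ or $\overline w$ is a palindrome; (iii) every complete return word of $v$ is a palindrome.
   Context: For a finite word $w$, $\overline{w}$ denotes its reversal; $w$ is a palindrome if $w=\overline w$. The language of $\mathbf u$ is closed under reversal if $\overline w$ is a factor of $\mathbf u$ whenever $w$ is (this implies every factor occurs infinitely often). A complete return word of a factor $w$ is a factor $q$ of $\mathbf u$ such that $w$ is a prefix and a suffix of $q$ and $w$ occurs in $q$ exactly twice. *)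

From mathcomp Require Import all_boot.
Set Implicit Arguments. Unset Strict Implicit. Unset Printing Implicit Defensive.

Section Words.
Variable A : eqType.

Definition window (u : nat -> A) (i n : nat) : seq A := mkseq (fun k => u (i + k)) n.

Definition factor (u : nat -> A) (w : seq A) : Prop := exists i, window u i (size w) = w.

Definition palindrome (w : seq A) : bool := rev w == w.

Definition closed_under_reversal (u : nat -> A) : Prop :=
  forall w, factor u w -> factor u (rev w).

Definition occ (p f : seq A) : nat :=
  count (fun i => take (size p) (drop i f) == p) (iota 0 (size f - size p).+1).

Definition longest_pal_suffix (f p : seq A) : Prop :=
  [/\ suffix p f, palindrome p &
      forall q, suffix q f -> palindrome q -> size q <= size p].

Definition complete_return_word (u : nat -> A) (w q : seq A) : Prop :=
  [/\ factor u q, prefix w q, suffix w q & occ w q = 2].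

End Words.

(** The longest palindromic suffix [p] of a long factor [f] occurs only once
    in [f], so it must start at the only position where it can, and in each
    case this forces [p = f]. If the long border of [f] ([w], [rev w] or [v])
    is at most as long as [p], palindromicity of [p] mirrors that border to an
    occurrence inside [p], giving (i) directly and, in (ii) and (iii), an extra
    occurrence unless [p] starts at the beginning of [f]. If the border is
    longer than [p], then [p] also occurs inside the border at the beginning
    of [f], which again pins [p] down. *)

From mathcomp Require Import all_boot zify.
Set Implicit Arguments. Unset Strict Implicit. Unset Printing Implicit Defensive.

Section Occurrences.
Variable A : eqType.
Implicit Types (x f b c : seq A).

Lemma occ_ge_positions x f (l : seq nat) : uniq l ->
  (forall i, i \in l -> exists b c, f = b ++ x ++ c /\ size b = i) ->
  size l <= occ x f.
Proof.
move=> ul occ_at; rewrite /occ -size_filter; apply: uniq_leq_size => // i il.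
have [b [c [-> <-]]] := occ_at i il.
rewrite mem_filter mem_iota drop_size_cat // take_size_cat // eqxx /= !size_cat.
lia.
Qed.

Lemma occ_self x : occ x x = 1.
Proof. by rewrite /occ subnn /= drop0 take_size eqxx. Qed.

Lemma occ_ge2 x f b1 c1 b2 c2 :
  f = b1 ++ x ++ c1 -> f = b2 ++ x ++ c2 -> size b1 != size b2 -> 1 < occ x f.
Proof.
move=> E1 E2 neq12; apply: (occ_ge_positions (l := [:: size b1; size b2])).
  by rewrite /= inE neq12.
by move=> i; rewrite !inE => /orP [] /eqP ->; [exists b1, c1 | exists b2, c2].
Qed.

Lemma occ_ge3 x f b1 c1 b2 c2 b3 c3 :
  f = b1 ++ x ++ c1 -> f = b2 ++ x ++ c2 -> f = b3 ++ x ++ c3 ->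
  uniq [:: size b1; size b2; size b3] -> 2 < occ x f.
Proof.
move=> E1 E2 E3 u123; apply: (occ_ge_positions u123) => i.
by rewrite !inE => /or3P [] /eqP ->; [exists b1, c1 | exists b2, c2 | exists b3, c3].
Qed.

Lemma occ1_unique x f b1 c1 b2 c2 : occ x f = 1 ->
  f = b1 ++ x ++ c1 -> f = b2 ++ x ++ c2 -> b1 = b2 /\ c1 = c2.
Proof.
move=> occ1 E1 E2; have size_b : size b1 = size b2.
  by apply/eqP/negPn/negP => /(occ_ge2 E1 E2); rewrite occ1.
move/eqP: (etrans (esym E1) E2); rewrite eqseq_cat // => /andP [/eqP -> ].
by rewrite eqseq_cat // => /andP [_ /eqP ->].
Qed.

Lemma occ2_prefix_suffix x f b0 c0 b c : occ x f = 2 ->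
  f = x ++ c0 -> f = b0 ++ x -> f = b ++ x ++ c -> b = [::] \/ c = [::].
Proof.
move=> occ2 Ep Es E.
have b0_neq0 : size b0 != 0.
  by apply: contra_eqN occ2 => /eqP/size0nil b00; rewrite Es b00 occ_self.
case: b E => [|y b] E; [by left | right].
case: c E => [|z c] E //.
have size_f : size b0 + size x = (size b).+1 + size x + (size c).+1.
  by rewrite -size_cat -Es E !size_cat /= addnA.
have Es' : f = b0 ++ x ++ [::] by rewrite cats0.
have := occ_ge3 (b1 := [::]) Ep Es' E.
by rewrite occ2 /= !inE; move: b0_neq0; lia.
Qed.

End Occurrences.

Section Palindromes.
Variable A : eqType.
Implicit Types (x y f p : seq A).

Lemma longest_pal_suffix_exists f : exists p, longest_pal_suffix f p.
Proof.
have ex_pal : exists k, palindrome (drop k f) by exists (size f); rewrite drop_size.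
case: (ex_minnP ex_pal) => k pal_k min_k; exists (drop k f); split => //.
  by apply/suffixP; exists (take k f); rewrite cat_take_drop.
move=> q /suffixP [s Ef] pal_q.
have := min_k (size s); rewrite Ef drop_size_cat // => /(_ pal_q).
by rewrite size_drop size_cat; lia.
Qed.

Lemma suffix_nested x y f :
  suffix x f -> suffix y f -> size x <= size y -> suffix x y.
Proof.
rewrite !suffixE => /eqP <- /eqP <- le_xy; rewrite drop_drop.
by move: le_xy; rewrite !size_drop => le_xy; apply/eqP; congr drop; lia.
Qed.

Lemma palindrome_suffix_prefix p x : palindrome p -> suffix x p -> prefix (rev x) p.
Proof. by move=> /eqP pal_p; rewrite prefix_revLR pal_p. Qed.

End Palindromes.

Section UniqueLongestPalSuffix.
Variables (A : eqType) (u : nat -> A) (H : nat).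
Hypothesis lps_occ1 : forall f, factor u f -> H <= size f ->
  forall p, longest_pal_suffix f p -> occ p f = 1.
Implicit Types (x w v f p q e : seq A).

Lemma lps_occ1_prefix x f p : factor u f -> H <= size x -> prefix x f ->
  longest_pal_suffix f p -> occ p f = 1.
Proof.
move=> ff Hx /prefixP [s Ef]; apply: lps_occ1 => //.
by apply: leq_trans Hx _; rewrite Ef size_cat leq_addr.
Qed.

Lemma return_word_infix_rev w q :
  H <= size w -> complete_return_word u w q -> infix (rev w) q.
Proof.
move=> Hw [fq pre_wq suf_wq occ2].
have [p lp] := longest_pal_suffix_exists q.
have occp := lps_occ1_prefix fq Hw pre_wq lp.
case: lp => suf_pq pal_p _.
case: (leqP (size w) (size p)) => [le_wp | lt_pw].
  have := palindrome_suffix_prefix pal_p (suffix_nested suf_wq suf_pq le_wp).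
  by move/prefixW/infix_trans; apply; apply: suffixW.
have /suffixP [r Ew] := suffix_nested suf_pq suf_wq (ltnW lt_pw).
have /prefixP [s Eqw] := pre_wq.
have /suffixP [t Eqp] := suf_pq.
have Eqp' : q = t ++ p ++ [::] by rewrite cats0.
have Eqw' : q = r ++ p ++ s by rewrite Eqw Ew catA.
have [_ s0] := occ1_unique occp Eqw' Eqp'.
by move: occ2; rewrite Eqw s0 cats0 occ_self.
Qed.

Lemma rev_bordered_palindrome w e : H <= size w -> factor u e ->
  prefix w e -> suffix (rev w) e -> occ w e = 1 -> palindrome e.
Proof.
move=> Hw fe pre_we suf_we occw.
have [p lp] := longest_pal_suffix_exists e.
have occp := lps_occ1_prefix fe Hw pre_we lp.
case: lp => suf_pe pal_p _.
have /prefixP [s Eew] := pre_we; have /suffixP [t Eep] := suf_pe.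
suff t0 : t = [::] by rewrite Eep t0.
case: (leqP (size w) (size p)) => [le_wp | lt_pw].
  have le_wp' : size (rev w) <= size p by rewrite size_rev.
  have := palindrome_suffix_prefix pal_p (suffix_nested suf_we suf_pe le_wp').
  rewrite revK => /prefixP [d Ep].
  have Eep' : e = t ++ w ++ d by rewrite Eep Ep.
  by have [] := occ1_unique (b1 := [::]) occw Eew Eep'.
have lt_pw' : size p <= size (rev w) by rewrite size_rev ltnW.
have := suffix_nested suf_pe suf_we lt_pw'.
rewrite -prefix_revLR (eqP pal_p) => /prefixP [d Ew].
have Eew' : e = [::] ++ p ++ d ++ s by rewrite Eew Ew -catA.
have Eep' : e = t ++ p ++ [::] by rewrite cats0.
by have [] := occ1_unique occp Eew' Eep'.
Qed.

Lemma palindrome_return_word v q :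
  H <= size v -> palindrome v -> complete_return_word u v q -> palindrome q.
Proof.
move=> Hv pal_v [fq pre_vq suf_vq occ2].
have [p lp] := longest_pal_suffix_exists q.
have occp := lps_occ1_prefix fq Hv pre_vq lp.
have le_vp : size v <= size p by case: lp => _ _; apply.
case: lp => suf_pq pal_p _.
have /prefixP [s Eqv] := pre_vq; have /suffixP [s' Eqv'] := suf_vq.
have /suffixP [t Eqp] := suf_pq.
suff t0 : t = [::] by rewrite Eqp t0.
have := palindrome_suffix_prefix pal_p (suffix_nested suf_vq suf_pq le_vp).
rewrite (eqP pal_v) => /prefixP [d Ep].
have Eq_tvd : q = t ++ v ++ d by rewrite Eqp Ep.
have [// | d0] := occ2_prefix_suffix occ2 Eqv Eqv' Eq_tvd.
have Eqp1 : q = [::] ++ p ++ s by rewrite Eqv Ep d0 cats0.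
have Eqp2 : q = t ++ p ++ [::] by rewrite cats0.
by have [] := occ1_unique occp Eqp1 Eqp2.
Qed.

End UniqueLongestPalSuffix.

Theorem lemma4p4 (A : eqType) (u : nat -> A) (H : nat) :
  closed_under_reversal u ->
  (forall f, factor u f -> H <= size f ->
     forall p, longest_pal_suffix f p -> occ p f = 1) ->
  (forall w, factor u w -> ~~ palindrome w -> H <= size w ->
     (forall q, complete_return_word u w q -> infix (rev w) q) /\
     (forall e, factor u e -> prefix w e -> suffix (rev w) e ->
        occ w e = 1 -> occ (rev w) e = 1 -> palindrome e)) /\
  (forall v, factor u v -> palindrome v -> H <= size v ->
     forall q, complete_return_word u v q -> palindrome q).
Proof.
move=> _ lps_occ1; split.
- move=> w _ _ Hw; split=> [q | e fe pre_we suf_we occw _].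
  + exact (return_word_infix_rev lps_occ1 Hw).
  + exact (rev_bordered_palindrome lps_occ1 Hw fe pre_we suf_we occw).
- by move=> v _ pal_v Hv q; exact (palindrome_return_word lps_occ1 Hv pal_v).
Qed.
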